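(* Let $p\in(0,1)$ and let $(\lambda_n)_{n\ge1}$ be a sequence with $\lambda_1=1$ and $0\le\lambda_n\le\lambda_{n-1}$ for all $n>1$. Let $r_1,r_2,\dots$ be $\{0,1\}$-valued random variables with $\Pr(r_1=1)=p$ and, for every $n\ge2$, $\Pr(r_n=1\mid r_1,\dots,r_{n-1})=\lambda_n p+(1-\lambda_n)\bar p_{n-1}$, where $\bar p_m=\frac1m\sum_{i=1}^m r_i$. Then for all integers $1\le m<n$, \[\mathbb{E}[\bar p_n-p\mid\bar p_m]=(\bar p_m-p)\prod_{i=m+1}^{n}\Big(1-\frac{\lambda_i}{i}\Big).\] *)

From HB Require Import structures.
From mathcomp Require Import all_boot all_order all_algebra.
From mathcomp Require Import all_classical all_reals all_analysis.
Set Implicit Arguments. Unset Strict Implicit. Unset Printing Implicit Defensive.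
Import Order.TTheory GRing.Theory Num.Theory.
Local Open Scope classical_set_scope.
Local Open Scope ring_scope.

Definition pbar {T : Type} {R : realType} (r : nat -> T -> bool) (m : nat) (w : T) : R :=
  (\sum_(1 <= i < m.+1) ((r i w : nat)%:R : R)) / m%:R.

(* It is only meaningful (and only used) P-almost surely. *)
Definition cond_exp_discrete {d} {T : measurableType d} {R : realType}
  (P : probability T R) (X : T -> R) {U : Type} (Y : T -> U) (w : T) : R :=
  fine (\int[P]_(x in [set x | Y x = Y w]) (X x)%:E)
  / fine (P [set x | Y x = Y w]).

Definition prefix_event {T : Type} (r : nat -> T -> bool) (s : seq bool) : set T :=
  [set w | forall i, (1 <= i <= size s)%N -> r i w = nth false s i.-1].

From HB Require Import structures.
From mathcomp Require Import all_boot all_order all_algebra.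
From mathcomp Require Import all_classical all_reals all_analysis.
From mathcomp Require Import ring.
Import Order.TTheory GRing.Theory Num.Theory.
Local Open Scope classical_set_scope.
Local Open Scope ring_scope.

(* Write q s for the probability that the first bits of the process are s, and
   c s = lambda_{k+1} p + (1 - lambda_{k+1}) mean(s) for a string s of length k.
   The hypotheses say q (s ++ [1]) = c s * q s and q (s ++ [0]) = (1 - c s) * q s,
   and a one-line computation shows that, averaged with these weights, the
   deviation mean(s) - p is multiplied by 1 - lambda_{k+1}/(k+1) from k to k+1.
   Summing over the strings whose first m bits have mean v, the total weight stays
   P(pbar_m = v), while the weighted deviation starts at (v - p) P(pbar_m = v) and
   picks up one such factor per step; their quotient is the conditional
   expectation. It is well defined off the finitely many null prefix events,
   hence almost surely. *)

Fixpoint bitseqs (k : nat) : seq (seq bool) :=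
  if k is k'.+1 then [seq rcons s b | s <- bitseqs k', b <- [:: true; false]]
  else [:: [::]].

Lemma mem_bitseqs k s : (s \in bitseqs k) = (size s == k).
Proof.
elim: k s => [|k IH] s; first by case: s.
apply/allpairsP/idP => [[[s' b] /= [s'_in _ ->]]|].
  by rewrite size_rcons eqSS -IH.
case/lastP: s => [//|s b]; rewrite size_rcons eqSS -IH => s_in.
by exists (s, b); case: b.
Qed.

Lemma uniq_bitseqs k : uniq (bitseqs k).
Proof.
elim: k => [//|k IH]; apply: allpairs_uniq => //.
by move=> [s1 b1] [s2 b2] _ _ /= /rcons_inj [-> ->].
Qed.

Lemma big_bitseqsS (R : Type) (idx : R) (op : Monoid.law idx) k (F : seq bool -> R) :
  \big[op/idx]_(s <- bitseqs k.+1) F s =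
  \big[op/idx]_(s <- bitseqs k) op (F (rcons s true)) (F (rcons s false)).
Proof.
rewrite big_allpairs_dep; apply: eq_bigr => s _.
by rewrite !big_cons big_nil Monoid.mulm1.
Qed.

Definition bit_mean {R : numFieldType} (s : seq bool) : R :=
  (count id s)%:R / (size s)%:R.

Section Drift.
Context {R : numFieldType} (lambda : nat -> R) (p : R).

Definition next_prob (s : seq bool) : R :=
  lambda (size s).+1 * p + (1 - lambda (size s).+1) * bit_mean s.

Lemma bit_mean_drift s : (0 < size s)%N ->
  next_prob s * (bit_mean (rcons s true) - p)
  + (1 - next_prob s) * (bit_mean (rcons s false) - p)
  = (1 - lambda (size s).+1 / (size s).+1%:R) * (bit_mean s - p).
Proof.
rewrite /next_prob /bit_mean !size_rcons -!cats1 !count_cat /= addn0 natrD.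
set k := size s; set l := lambda k.+1 => k_gt0.
have -> : (k.+1%:R : R) = k%:R + 1 by rewrite mulrSr.
have k_neq0 : (k%:R : R) != 0 by rewrite pnatr_eq0 -lt0n.
have k1_neq0 : (k%:R + 1 : R) != 0 by rewrite -mulrSr pnatr_eq0.
by field; rewrite k_neq0 k1_neq0.
Qed.

Variables (m : nat) (g : pred (seq bool)).

Lemma big_cylinderS (F : seq bool -> R) k : (m <= k)%N ->
  \sum_(s <- bitseqs k.+1 | g (take m s)) F s
  = \sum_(s <- bitseqs k | g (take m s)) (F (rcons s true) + F (rcons s false)).
Proof.
move=> le_mk; rewrite big_mkcond [RHS]big_mkcond big_bitseqsS big_seq [RHS]big_seq.
apply: eq_bigr => s; rewrite mem_bitseqs => /eqP size_s.
rewrite -!cats1 !takel_cat ?size_s //.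
by case: ifP; rewrite /= ?addr0.
Qed.

Variable q : seq bool -> R.
Hypothesis q_rcons_true : forall s, q (rcons s true) = next_prob s * q s.
Hypothesis q_rcons_false : forall s, q (rcons s false) = (1 - next_prob s) * q s.

(* With [q s] the probability that the first [size s] bits are [s], these are
   P(A) and E[pbar_k - p; A] for the event A = {g (r_1, ..., r_m)}. *)
Definition cylinder_mass k := \sum_(s <- bitseqs k | g (take m s)) q s.

Definition cylinder_deviation k :=
  \sum_(s <- bitseqs k | g (take m s)) (bit_mean s - p) * q s.

Lemma cylinder_massS k : (m <= k)%N -> cylinder_mass k.+1 = cylinder_mass k.
Proof.
move=> le_mk; rewrite /cylinder_mass big_cylinderS //; apply: eq_bigr => s _.
by rewrite q_rcons_true q_rcons_false; ring.
Qed.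

Lemma cylinder_deviationS k : (m <= k)%N -> (0 < k)%N ->
  cylinder_deviation k.+1 = (1 - lambda k.+1 / k.+1%:R) * cylinder_deviation k.
Proof.
move=> le_mk k_gt0; rewrite /cylinder_deviation big_cylinderS // mulr_sumr.
rewrite big_seq_cond [RHS]big_seq_cond; apply: eq_bigr => s /andP[+ _].
rewrite mem_bitseqs => /eqP size_s; rewrite mulrA -size_s -bit_mean_drift ?size_s //.
by rewrite q_rcons_true q_rcons_false; ring.
Qed.

Lemma cylinder_deviation_level v n :
  (forall s, size s = m -> g s -> bit_mean s = v) -> (0 < m)%N -> (m <= n)%N ->
  cylinder_deviation n
  = (v - p) * \prod_(m.+1 <= i < n.+1) (1 - lambda i / i%:R) * cylinder_mass n.
Proof.
move=> mean_g m_gt0 /subnK <-; elim: (n - m)%N => [|j IH].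
  rewrite add0n big_geq // mulr1 /cylinder_deviation /cylinder_mass mulr_sumr.
  rewrite big_seq_cond [RHS]big_seq_cond; apply: eq_bigr => s /andP[].
  rewrite mem_bitseqs => /eqP size_s; rewrite take_oversize ?size_s //.
  by move=> /(mean_g _ size_s) ->.
have le_mjm : (m <= j + m)%N by rewrite leq_addl.
rewrite addSn big_nat_recr /= ?ltnS // cylinder_deviationS ?cylinder_massS ?IH //.
  by ring.
exact: leq_trans le_mjm.
Qed.

End Drift.

Section Bits.
Context {T : Type} (r : nat -> T -> bool).

Definition bits k w := [seq r i w | i <- iota 1 k].

Lemma size_bits k w : size (bits k w) = k.
Proof. by rewrite size_map size_iota. Qed.

Lemma bitsS k w : bits k.+1 w = rcons (bits k w) (r k.+1 w).
Proof. by rewrite /bits -[k.+1]addn1 iotaD map_cat cats1 add1n addn1. Qed.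

Lemma take_bits j k w : (j <= k)%N -> take j (bits k w) = bits j w.
Proof. by move=> le_jk; rewrite /bits -map_take take_iota (minn_idPl le_jk). Qed.

Lemma prefix_eventE s : prefix_event r s = [set w | bits (size s) w = s].
Proof.
apply/seteqP; split => w /=.
  move=> r_s; apply: (@eq_from_nth _ false); first by rewrite size_bits.
  move=> i; rewrite size_bits => lt_is.
  by rewrite (nth_map 0) ?size_iota // nth_iota // r_s //= add1n ltnS.
move=> <- i /andP[i_gt0]; rewrite size_bits => le_ik.
by rewrite (nth_map 0) ?size_iota ?nth_iota ?add1n ?prednK.
Qed.

Lemma prefix_event_nil : prefix_event r [::] = setT.
Proof. by rewrite prefix_eventE; apply/seteqP; split. Qed.

Lemma prefix_event_rcons s b :
  prefix_event r (rcons s b) = prefix_event r s `&` [set w | r (size s).+1 w = b].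
Proof.
rewrite !prefix_eventE size_rcons; apply/seteqP; split => w /=; rewrite bitsS.
  by move=> /rcons_inj [-> ->].
by move=> [-> ->].
Qed.

Lemma pbar_bits (R : realType) k w : pbar r k w = bit_mean (bits k w) :> R.
Proof.
rewrite /pbar /bit_mean size_bits count_map -sum1_count natr_sum.
rewrite /index_iota subSS subn0 [in RHS]big_mkcond; congr (_ / _).
by apply: eq_bigr => i _ /=; case: (r i w).
Qed.

End Bits.

Section Measurable.
Context {d} {T : measurableType d} {R : realType} (r : nat -> T -> bool).
Hypothesis measurable_bit : forall n, (1 <= n)%N -> measurable [set w | r n w].

Lemma measurable_prefix_event s : measurable (prefix_event r s).
Proof.
elim/last_ind: s => [|s b IH]; first by rewrite prefix_event_nil.
rewrite prefix_event_rcons; apply: measurableI => //.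
case: b; first exact: measurable_bit.
rewrite (_ : [set w | _ = false] = ~` [set w | r (size s).+1 w]).
  exact/measurableC/measurable_bit.
by apply/seteqP; split => w /=; case: (r _ w).
Qed.

Lemma bigsetU_prefix_event k (Q : pred (seq bool)) :
  \big[setU/set0]_(s <- bitseqs k | Q s) prefix_event r s = [set x | Q (bits r k x)].
Proof.
rewrite -bigcup_seq_cond; apply/seteqP; split => x /=.
  move=> [s /andP[]]; rewrite mem_bitseqs => /eqP <- Qs.
  by rewrite prefix_eventE /= => ->.
move=> Qx; exists (bits r k x); last by rewrite prefix_eventE /= size_bits.
by rewrite /= mem_bitseqs size_bits eqxx.
Qed.

Lemma measurable_bits_preimage k (Q : set (seq bool)) :
  measurable [set x | Q (bits r k x)].
Proof.
rewrite (_ : [set x | _] = [set x | `[< Q (bits r k x) >]]); last first.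
  by apply/seteqP; split => x /asboolP.
rewrite -(bigsetU_prefix_event k (fun s => `[< Q s >])).
by apply: bigsetU_measurable => s _; exact: measurable_prefix_event.
Qed.

Lemma integral_bits (mu : measure T R) (h : seq bool -> R) k :
  (\int[mu]_x (h (bits r k x))%:E
   = \sum_(s <- bitseqs k) (h s)%:E * mu (prefix_event r s))%E.
Proof.
have cover : [set: T] = \big[setU/set0]_(s <- bitseqs k) prefix_event r s.
  by rewrite (bigsetU_prefix_event k predT); apply/seteqP.
rewrite cover integral_bigsetU_EFin.
- apply: eq_big_seq => s; rewrite mem_bitseqs => /eqP size_s.
  rewrite (@eq_integral _ _ _ _ _ (cst (h s)%:E)) ?integral_cst //.
    exact: measurable_prefix_event.
  by move=> x; rewrite inE prefix_eventE /= size_s => ->.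
- exact: measurable_prefix_event.
- exact: uniq_bitseqs.
- move=> s1 s2 /=; rewrite !mem_bitseqs => /eqP size_s1 /eqP size_s2 [x []].
  by rewrite !prefix_eventE /= size_s1 size_s2 => -> ->.
- rewrite -cover; apply/measurable_realfun.measurable_EFinP => _ Y mY; rewrite setTI.
  exact: (measurable_bits_preimage k (h @^-1` Y)).
Qed.

Lemma ae_prefix_event_bits_neq0 (mu : measure T R) k :
  {ae mu, forall w, mu (prefix_event r (bits r k w)) != 0}.
Proof.
have null_prefixes : mu.-negligible
    (\big[setU/set0]_(s <- bitseqs k | mu (prefix_event r s) == 0) prefix_event r s).
  elim/big_ind: _ => [|A B|s /eqP mu_s0]; [exact: negligible_set0|exact: negligibleU|].
  by exists (prefix_event r s); split => //; exact: measurable_prefix_event.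
rewrite bigsetU_prefix_event in null_prefixes.
by apply: negligibleS null_prefixes => w /= /negP; rewrite negbK.
Qed.

End Measurable.

Section Process.
Context d (T : measurableType d) (R : realType) (P : probability T R) (p : R)
  (lambda : nat -> R) (r : nat -> T -> bool).
Hypotheses (lambda1 : lambda 1%N = 1)
  (measurable_bit : forall n, (1 <= n)%N -> measurable [set w | r n w])
  (prob_first_bit : P [set w | r 1%N w] = p%:E)
  (cond_prob_bit : forall n (s : seq bool), (2 <= n)%N -> size s = n.-1 ->
     P (prefix_event r s `&` [set w | r n w])
     = ((lambda n * p + (1 - lambda n) * ((count id s)%:R / (n.-1)%:R))%:E
        * P (prefix_event r s))%E).

Let prefix_prob s := fine (P (prefix_event r s)).

Lemma prefix_probE s : P (prefix_event r s) = (prefix_prob s)%:E.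
Proof. by rewrite fineK // fin_num_measure //; exact: measurable_prefix_event. Qed.

Lemma prefix_prob_rcons_true s :
  prefix_prob (rcons s true) = next_prob lambda p s * prefix_prob s.
Proof.
rewrite /prefix_prob prefix_event_rcons; case: s => [|b s].
  (* [bit_mean [::]] is the junk value 0 / 0 = 0, cancelled by [lambda 1 = 1]. *)
  rewrite prefix_event_nil setTI prob_first_bit probability_setT /next_prob lambda1.
  by rewrite subrr mul0r addr0 mul1r mulr1.
by rewrite (cond_prob_bit (size (b :: s)).+1) // prefix_probE.
Qed.

Lemma prefix_prob_rcons_false s :
  prefix_prob (rcons s false) = (1 - next_prob lambda p s) * prefix_prob s.
Proof.
have P_true : P (prefix_event r s `&` [set w | r (size s).+1 w])
              = (next_prob lambda p s * prefix_prob s)%:E.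
  by rewrite -prefix_prob_rcons_true -prefix_probE prefix_event_rcons.
rewrite /prefix_prob; have -> : prefix_event r (rcons s false)
                             = prefix_event r s `\` [set w | r (size s).+1 w].
  by rewrite prefix_event_rcons; apply/seteqP; split => w /= [?]; case: (r _ w).
rewrite measureD; last 3 first.
- exact: measurable_prefix_event.
- exact: measurable_bit.
- by rewrite ltey_eq fin_num_measure //; exact: measurable_prefix_event.
rewrite [X in (_ - X)%E]P_true [X in (X - _)%E]prefix_probE -EFinB /=.
by rewrite mulrBl mul1r.
Qed.

Lemma integral_cylinder m n (g : pred (seq bool)) (h : seq bool -> R) : (m <= n)%N ->
  (\int[P]_(x in [set x | g (bits r m x)]) (h (bits r n x))%:E
   = (\sum_(s <- bitseqs n | g (take m s)) h s * prefix_prob s)%:E)%E.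
Proof.
move=> le_mn; rewrite integral_mkcond (eq_integral
  (fun x => ((fun s => if g (take m s) then h s else 0) (bits r n x))%:E)); last first.
  move=> x _; rewrite patchE take_bits //.
  by case: (boolP (g _)) => [g_x|/negP g_x]; [rewrite mem_set|rewrite memNset].
rewrite (integral_bits _ measurable_bit P (fun s => if g (take m s) then h s else 0)).
under eq_bigr do rewrite [X in (_ * X)%E]prefix_probE -EFinM.
rewrite sumEFin [in RHS]big_mkcond; congr EFin; apply: eq_bigr => s _.
by case: ifP; rewrite ?mul0r.
Qed.

Lemma cond_exp_pbar m n w : (1 <= m)%N -> (m < n)%N ->
  P (prefix_event r (bits r m w)) != 0 ->
  cond_exp_discrete P (fun x => pbar r n x - p) (pbar (R:=R) r m) w
  = (pbar r m w - p) * \prod_(m.+1 <= i < n.+1) (1 - lambda i / i%:R).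
Proof.
move=> m_gt0 lt_mn Pw_neq0; have le_mn := ltnW lt_mn; rewrite /cond_exp_discrete.
set v := pbar (R:=R) r m w; pose g s := bit_mean s == v.
have level_setE : [set x | pbar r m x = v] = [set x | g (bits r m x)].
  by apply/seteqP; split => x /=; rewrite /g pbar_bits => /eqP.
have P_level : P [set x | pbar r m x = v] = (cylinder_mass m g prefix_prob n)%:E.
  rewrite level_setE -[LHS]mul1e -integral_cst; last first.
    exact: (measurable_bits_preimage _ measurable_bit m g).
  rewrite (integral_cylinder m n g (fun=> 1) le_mn).
  by under eq_bigr do rewrite mul1r.
have int_level : (\int[P]_(x in [set x | pbar r m x = v]) (pbar r n x - p)%:E
                  = (cylinder_deviation p m g prefix_prob n)%:E)%E.
  rewrite level_setE (eq_integral (fun x => ((fun s => bit_mean s - p) (bits r n x))%:E)).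
    exact: integral_cylinder.
  by move=> x _; rewrite pbar_bits.
have mass_neq0 : cylinder_mass m g prefix_prob n != 0.
  have prefix_sub : prefix_event r (bits r m w) `<=` [set x | pbar r m x = v].
    move=> x; rewrite prefix_eventE size_bits /= => bits_x.
    by rewrite /v !pbar_bits bits_x.
  apply: contra Pw_neq0 => /eqP mass0; rewrite -measure_le0.
  apply: le_trans (le_measure _ _ _ prefix_sub) _; rewrite ?inE.
  - exact: measurable_prefix_event.
  - by rewrite level_setE; exact: (measurable_bits_preimage _ measurable_bit m g).
  - by rewrite [X in (X <= _)%E]P_level mass0.
rewrite int_level P_level /=.
rewrite (cylinder_deviation_level _ _ _ _ _ prefix_prob_rcons_true
                                  prefix_prob_rcons_false v n) ?mulfK //.
by move=> s _ /eqP.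
Qed.

End Process.

Theorem propositionA7 (d : measure_display) (T : measurableType d) (R : realType)
  (P : probability T R) (p : R) (lambda : nat -> R) (r : nat -> T -> bool) :
  0 < p < 1 ->
  lambda 1%N = 1 ->
  (forall n, (1 < n)%N -> 0 <= lambda n <= lambda n.-1) ->
  (forall n, (1 <= n)%N -> measurable [set w | r n w]) ->
  P [set w | r 1%N w] = p%:E ->
  (forall n (s : seq bool), (2 <= n)%N -> size s = n.-1 ->
     P (prefix_event r s `&` [set w | r n w])
     = ((lambda n * p + (1 - lambda n) * ((count id s)%:R / (n.-1)%:R))%:E
        * P (prefix_event r s))%E) ->
  forall m n : nat, (1 <= m)%N -> (m < n)%N ->
  {ae P, forall w,
     cond_exp_discrete P (fun x => @pbar T R r n x - p) (@pbar T R r m) w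
     = (@pbar T R r m w - p) * \prod_(m.+1 <= i < n.+1) (1 - lambda i / i%:R)}.
Proof.
(* The bounds on p and lambda only make the conditional probabilities lie in
   [0, 1]; the identity itself does not need them. *)
move=> _ lambda1 _ measurable_bit prob_first_bit cond_prob_bit m n m_gt0 lt_mn.
apply: filterS (ae_prefix_event_bits_neq0 _ measurable_bit P m) => w.
exact: cond_exp_pbar.
Qed.
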